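(* For every $s\in\mathbb{C}$ with $\mathrm{Re}(s)>1$, $$\sum_{n\geq1}\frac{\tau(n)\Omega(n)}{n^s}=2\zeta^2(s)P_\Omega(s),\qquad\text{where } P_\Omega(s)=\sum_p\frac{\Omega(p)}{p^s-1}=\sum_p\frac{1}{p^s-1}.$$
   Context: $\tau(n)$ is the number of positive divisors of $n$, $\Omega(n)$ is the number of prime factors of $n$ counted with multiplicity, $\zeta(s)=\sum_{n\geq1}n^{-s}$ is the Riemann zeta function, and sums over $p$ run over all primes. *)

From Stdlib Require Import Reals.
From Coquelicot Require Import Coquelicot.
From mathcomp Require Import ssreflect ssrbool ssrnat seq prime.

Definition tau (n : nat) : nat := size (divisors n).

Definition bigOmega (n : nat) : nat :=
  foldr (fun p acc => (logn p n + acc)%nat) 0%nat (primes n).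

Open Scope R_scope.

(* complex power x^s = exp(s ln x) for real x > 0 and complex s *)
Definition cpow (x : R) (s : C) : C :=
  (exp (Re s * ln x) * cos (Im s * ln x), exp (Re s * ln x) * sin (Im s * ln x)).

(* n-th term (n >= 1, index shifted: term k is for n = k+1) of zeta(s) *)
Definition zeta_term (s : C) (k : nat) : C :=
  Cinv (cpow (INR (S k)) s).

(* term of sum_{n>=1} tau(n) Omega(n) / n^s, term k for n = k+1 *)
Definition tauOmega_term (s : C) (k : nat) : C :=
  Cdiv (RtoC (INR (tau (S k) * bigOmega (S k))%nat)) (cpow (INR (S k)) s).

(* term of P_Omega(s) = sum_p Omega(p)/(p^s - 1), indexed by all n, zero off primes *)
Definition POmega_term (s : C) (n : nat) : C :=
  if prime n then Cdiv (RtoC (INR (bigOmega n))) (Cminus (cpow (INR n) s) (RtoC 1))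
  else RtoC 0.

Definition P1_term (s : C) (n : nat) : C :=
  if prime n then Cinv (Cminus (cpow (INR n) s) (RtoC 1)) else RtoC 0.

(* Let L be the indicator function of the prime powers p^k with k >= 1.  Counting the prime
   powers that divide n gives Omega = L * 1 (Dirichlet convolution), and pairing each divisor
   d of n with n/d gives tau(n) Omega(n) = sum_{de=n} (Omega(d) + Omega(e)) = 2 (Omega * 1)(n).
   So the Dirichlet series of tau Omega is 2 zeta(s)^2 sum_n L(n) n^-s, and grouping the prime
   powers by their prime, sum_n L(n) n^-s = sum_p sum_{k>=1} p^-ks = sum_p 1/(p^s - 1).  For
   Re s > 1 all these series converge absolutely, which justifies both the products and the
   regrouping. *)

From Stdlib Require Import Reals Lra Lia.
From Coquelicot Require Import Coquelicot.
From HB Require Import structures.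
From mathcomp Require Import ssreflect ssrbool ssrfun eqtype ssrnat seq div prime fintype bigop.
From mathcomp Require Import zify.

Open Scope R_scope.

HB.instance Definition _ := Monoid.isComLaw.Build R 0 Rplus
  (fun x y z => esym (Rplus_assoc x y z)) Rplus_comm Rplus_0_l.
HB.instance Definition _ := Monoid.isMulLaw.Build R 0 Rmult Rmult_0_l Rmult_0_r.
HB.instance Definition _ :=
  Monoid.isAddLaw.Build R Rmult Rplus Rmult_plus_distr_r Rmult_plus_distr_l.

HB.instance Definition _ :=
  Monoid.isComLaw.Build C (RtoC 0) Cplus Cplus_assoc Cplus_comm Cplus_0_l.
HB.instance Definition _ := Monoid.isMulLaw.Build C (RtoC 0) Cmult Cmult_0_l Cmult_0_r.
HB.instance Definition _ :=
  Monoid.isAddLaw.Build C Cmult Cplus Cmult_plus_distr_r Cmult_plus_distr_l.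

Lemma sum_nR_big (a : nat -> R) N : sum_n a N = \big[Rplus/0]_(i < N.+1) a i.
Proof.
elim: N => [|N IH]; first by rewrite sum_O big_ord_recr big_ord0 /= Rplus_0_l.
by rewrite sum_Sn IH [RHS]big_ord_recr.
Qed.

Lemma sum_nC_big (a : nat -> C) N : sum_n a N = \big[Cplus/RtoC 0]_(i < N.+1) a i.
Proof.
elim: N => [|N IH]; first by rewrite sum_O big_ord_recr big_ord0 /= Cplus_0_l.
by rewrite sum_Sn IH [RHS]big_ord_recr.
Qed.

Lemma Rle_sum I (r : seq I) (P : pred I) (F G : I -> R) :
  (forall i, P i -> F i <= G i) ->
  \big[Rplus/0]_(i <- r | P i) F i <= \big[Rplus/0]_(i <- r | P i) G i.
Proof.
move=> FG; apply: (big_ind2 Rle) => //; first exact: Rle_refl.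
by move=> *; apply: Rplus_le_compat.
Qed.

Lemma Rle_sum_subset I (r : seq I) (P Q : pred I) (F : I -> R) :
  (forall i, 0 <= F i) -> (forall i, P i -> Q i) ->
  \big[Rplus/0]_(i <- r | P i) F i <= \big[Rplus/0]_(i <- r | Q i) F i.
Proof.
move=> F_ge0 PQ; rewrite big_mkcond [X in _ <= X]big_mkcond; apply: Rle_sum => i _.
by case: (boolP (P i)) => [/PQ -> | _]; [exact: Rle_refl | case: (Q i); [|exact: Rle_refl]].
Qed.

Lemma Rsum_ge0 I (r : seq I) (P : pred I) (F : I -> R) :
  (forall i, P i -> 0 <= F i) -> 0 <= \big[Rplus/0]_(i <- r | P i) F i.
Proof.
move=> F_ge0; apply: (big_ind (Rle 0)) => [|x y|//]; first exact: Rle_refl.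
exact: Rplus_le_le_0_compat.
Qed.

Lemma Cmod_sum_le I (r : seq I) (P : pred I) (F : I -> C) :
  Cmod (\big[Cplus/RtoC 0]_(i <- r | P i) F i) <= \big[Rplus/0]_(i <- r | P i) Cmod (F i).
Proof.
apply: (big_ind2 (fun z x => Cmod z <= x)); first by rewrite Cmod_0; exact: Rle_refl.
  by move=> z1 x1 z2 x2 ? ?; apply: Rle_trans (Cmod_triangle _ _) _; apply: Rplus_le_compat.
by move=> i _; exact: Rle_refl.
Qed.

Section PairSums.
Local Open Scope nat_scope.
Variables (T : Type) (idx : T) (op : Monoid.com_law idx).

Lemma big_ord_widen_idx (P : pred nat) (F : nat -> T) n M : n <= M ->
  (forall i, n < i -> P i -> F i = idx) ->
  \big[op/idx]_(i < n.+1 | P i) F i = \big[op/idx]_(i < M.+1 | P i) F i.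
Proof.
move=> nM F0; rewrite (@big_ord_widen_cond _ _ op n.+1 M.+1) // big_mkcondr.
by apply: eq_bigr => i Pi; case: ltnP => // n_i; rewrite F0.
Qed.

Variable f : nat -> nat -> T.
Hypotheses (f0l : forall e, f 0 e = idx) (f0r : forall d, f d 0 = idx).

Lemma big_mul_eq_widen n M : n <= M ->
  \big[op/idx]_(d < M.+1) \big[op/idx]_(e < M.+1 | d * e == n) f d e =
  \big[op/idx]_(d < n.+1) \big[op/idx]_(e < n.+1 | d * e == n) f d e.
Proof.
move=> nM.
have f_outl d e : d * e == n -> n < d -> f d e = idx.
  case: e => [|e] /eqP de; first by rewrite f0r.
  by rewrite -de ltnNge leq_pmulr.
have f_outr d e : d * e == n -> n < e -> f d e = idx.
  case: d => [|d] /eqP de; first by rewrite f0l.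
  by rewrite -de ltnNge leq_pmull.
symmetry; transitivity (\big[op/idx]_(d < M.+1) \big[op/idx]_(e < n.+1 | d * e == n) f d e).
  apply: (big_ord_widen_idx xpredT
    (fun d => \big[op/idx]_(e < n.+1 | d * e == n) f d e) _ _ nM) => d n_d _.
  by rewrite big1 // => e /f_outl; apply.
apply: eq_bigr => d _; apply: (big_ord_widen_idx (fun e => d * e == n) (f d) _ _ nM).
by move=> e n_e /f_outr; apply.
Qed.

Lemma big_mul_eq_le N :
  \big[op/idx]_(n < N.+1) \big[op/idx]_(d < n.+1) \big[op/idx]_(e < n.+1 | d * e == n) f d e =
  \big[op/idx]_(d < N.+1) \big[op/idx]_(e < N.+1 | d * e <= N) f d e.
Proof.
rewrite (eq_bigr (fun n : 'I_N.+1 =>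
    \big[op/idx]_(d < N.+1) \big[op/idx]_(e < N.+1 | d * e == n) f d e)); last first.
  by move=> n _; rewrite big_mul_eq_widen // -ltnS.
rewrite exchange_big; apply: eq_bigr => d _.
rewrite (eq_bigr (fun n : 'I_N.+1 => \big[op/idx]_(e < N.+1) if d * e == n then f d e else idx));
  last by move=> n _; rewrite big_mkcond.
rewrite exchange_big [RHS]big_mkcond; apply: eq_bigr => e _.
rewrite -big_mkcond (eq_bigl (fun n : 'I_N.+1 => n == d * e :> nat)) => [|n]; last exact: eq_sym.
by rewrite (big_ord1_eq _ (fun _ => f d e)) ltnS.
Qed.

Lemma big_square_split N (F : nat -> nat -> T) :
  \big[op/idx]_(d < N.+1) \big[op/idx]_(e < N.+1) F d e =
  op (\big[op/idx]_(d < N.+1) \big[op/idx]_(e < N.+1 | d * e <= N) F d e)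
     (\big[op/idx]_(d < N.+1) \big[op/idx]_(e < N.+1 | N < d * e) F d e).
Proof.
rewrite -big_split; apply: eq_bigr => d _.
rewrite (bigID (fun e : 'I_N.+1 => d * e <= N)); congr (op _ _).
by apply: eq_bigl => e; rewrite ltnNge.
Qed.

Lemma big_mul_eq_dvdn n : 0 < n ->
  \big[op/idx]_(d < n.+1) \big[op/idx]_(e < n.+1 | d * e == n) f d e =
  \big[op/idx]_(d < n.+1 | d %| n) f d (n %/ d).
Proof.
move=> n_gt0.
have mul_eq d e : (d * e == n) = (d %| n) && (e == n %/ d).
  case: d => [|d]; first by rewrite mul0n dvd0n eq_sym (negbTE (lt0n_neq0 n_gt0)).
  apply/eqP/andP => [<- | [dvd /eqP ->]]; last by rewrite mulnC divnK.
  by rewrite dvdn_mulr // mulKn.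
rewrite [RHS]big_mkcond; apply: eq_bigr => d _; case: (boolP (d %| n)) => dn.
  rewrite (eq_bigl (fun e : 'I_n.+1 => e == n %/ d :> nat)) => [|e]; last by rewrite mul_eq dn.
  by rewrite big_ord1_eq ltnS leq_div.
by rewrite big_pred0 // => e; rewrite mul_eq (negbTE dn).
Qed.
End PairSums.

Lemma Rsum_square_le (F : nat -> nat -> R) m N :
  (forall d e, 0 <= F d e) -> (m * m <= N)%N ->
  \big[Rplus/0]_(d < m.+1) \big[Rplus/0]_(e < m.+1) F d e <=
  \big[Rplus/0]_(d < N.+1) \big[Rplus/0]_(e < N.+1 | (d * e <= N)%N) F d e.
Proof.
move=> F_ge0 mmN; have mN : (m.+1 <= N.+1)%N by nia.
rewrite (eq_bigr (fun d : 'I_m.+1 => \big[Rplus/0]_(e < N.+1 | (e < m.+1)%N) F d e));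
  last by move=> d _; exact: big_ord_widen.
rewrite (big_ord_widen N.+1 (fun d => \big[Rplus/0]_(e < N.+1 | (e < m.+1)%N) F d e) mN).
apply: (@Rle_trans _ (\big[Rplus/0]_(d < N.+1 | (d < m.+1)%N)
                       \big[Rplus/0]_(e < N.+1 | (d * e <= N)%N) F d e)).
  apply: Rle_sum => d dm; apply Rle_sum_subset => // e em.
  by apply: leq_trans mmN; exact: leq_mul.
by apply Rle_sum_subset => // d; exact: Rsum_ge0.
Qed.

Lemma is_lim_C_of_bound (u : nat -> C) (l : C) (e : nat -> R) :
  (forall N, Cmod (Cminus (u N) l) <= e N) -> is_lim_seq e 0 ->
  filterlim u eventually (locally l).
Proof.
move=> ue /is_lim_seq_spec e0; apply/filterlim_locally => eps.
case: (e0 eps) => N HN; exists N => n /HN en; apply: norm_compat1.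
apply: Rle_lt_trans (ue n) _; apply: Rle_lt_trans (Rle_abs _) _; by rewrite -(Rminus_0_r (e n)).
Qed.

Lemma is_lim_seq_Cmod_sub (u : nat -> C) l :
  filterlim u eventually (locally l) -> is_lim_seq (fun n => Cmod (Cminus (u n) l)) 0.
Proof.
move=> /(filterlim_locally_ball_norm (K := C_AbsRing)) ul.
apply/is_lim_seq_spec => eps; case: (ul eps) => N uN; exists N => n /uN.
by rewrite Rminus_0_r Rabs_pos_eq //; exact: Cmod_ge_0.
Qed.

Lemma is_lim_C_mult (u v : nat -> C) x y :
  filterlim u eventually (locally x) -> filterlim v eventually (locally y) ->
  filterlim (fun n => Cmult (u n) (v n)) eventually (locally (Cmult x y)).
Proof.
move=> /is_lim_seq_Cmod_sub ux /is_lim_seq_Cmod_sub vy.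
apply: (is_lim_C_of_bound _ _ (fun n =>
  Cmod (Cminus (u n) x) * (Cmod y + Cmod (Cminus (v n) y)) + Cmod x * Cmod (Cminus (v n) y))).
  move=> n; have -> : Cminus (Cmult (u n) (v n)) (Cmult x y) =
      Cplus (Cmult (Cminus (u n) x) (v n)) (Cmult x (Cminus (v n) y)) by rewrite /Cminus; ring.
  apply: Rle_trans (Cmod_triangle _ _) _; rewrite !Cmod_mult.
  apply: Rplus_le_compat_r; apply: Rmult_le_compat_l; first exact: Cmod_ge_0.
  have := Cmod_triangle y (Cminus (v n) y).
  by have -> : Cplus y (Cminus (v n) y) = v n by rewrite /Cminus; ring.
have -> : 0 = 0 * (Cmod y + 0) + Cmod x * 0 by ring.
apply: is_lim_seq_plus'; apply: is_lim_seq_mult' => //; try exact: is_lim_seq_const.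
by apply: is_lim_seq_plus' vy; exact: is_lim_seq_const.
Qed.

Lemma sum_n_le_series (a : nat -> R) l N :
  (forall n, 0 <= a n) -> is_series a l -> sum_n a N <= l.
Proof.
move=> a_ge0 al; apply: (is_lim_seq_incr_compare (sum_n a)) => // n.
by rewrite sum_Sn; have := a_ge0 n.+1; rewrite /plus /=; lra.
Qed.

Lemma ex_series_of_bounded (a : nat -> R) M :
  (forall n, 0 <= a n) -> (forall N, sum_n a N <= M) -> ex_series a.
Proof.
move=> a_ge0 aM; have [l al] : ex_finite_lim_seq (sum_n a).
  by apply: (ex_finite_lim_seq_incr _ M) => // n; rewrite sum_Sn /plus /=; have := a_ge0 n.+1; lra.
by exists l.
Qed.

Lemma ex_series_of_Cmod (a : nat -> C) : ex_series (fun n => Cmod (a n)) -> ex_series a.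
Proof. exact: (@ex_series_le C_AbsRing C_CompleteNormedModule a _ (fun n => Rle_refl _)). Qed.

Lemma Cmod_series_le (x : nat -> C) (y : nat -> R) X Y :
  is_series x X -> is_series y Y -> (forall n, Cmod (x n) <= y n) -> Cmod X <= Y.
Proof.
move=> xX yY xy.
have normX : is_lim_seq (fun N => Cmod (sum_n x N)) (Cmod X).
  exact: (filterlim_comp _ _ _ (sum_n x) (@norm _ C_NormedModule) _ _ _ xX (filterlim_norm X)).
suff : Rbar_le (Cmod X) Y by [].
have yY' : is_lim_seq (sum_n y) Y := yY.
apply: (is_lim_seq_le _ _ _ _ _ normX yY') => N.
apply: Rle_trans (norm_sum_n_m (K := C_AbsRing) x 0 N) _; exact: sum_n_m_le.
Qed.

(* Dominated convergence for series. *)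
Lemma is_lim_series_approx (u : nat -> C) (v : nat -> nat -> C) (w : nat -> R) L l :
  is_series u L -> (forall N, is_series (v N) (l N)) -> ex_series w ->
  (forall N n, (n <= N)%N -> v N n = u n) ->
  (forall N n, Cmod (Cminus (u n) (v N n)) <= w n) ->
  filterlim l eventually (locally L).
Proof.
move=> uL vl [W wW] vu uvw.
apply: (is_lim_C_of_bound _ _ (fun N => W - sum_n w N)) => [N|]; last first.
  rewrite -(Rminus_diag W); apply: is_lim_seq_minus' wW; exact: is_lim_seq_const.
pose d n := Cminus (u n) (v N n).
have d_head : sum_n d N = RtoC 0.
  rewrite /sum_n (sum_n_m_ext_loc _ (fun _ => zero)) ?sum_n_m_const_zero // => n [_ /ssrnat.leP nN].
  by rewrite /d vu // /Cminus Cplus_opp_r.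
have d_tail : is_series (fun k => d (N.+1 + k)%N) (Cminus L (l N)).
  apply: is_series_incr_n; first lia.
  rewrite d_head /plus /= Cplus_0_r.
  exact: is_series_minus uL (vl N).
have w_tail : is_series (fun k => w (N.+1 + k)%N) (W - sum_n w N).
  by apply: is_series_incr_n; [lia | rewrite /plus /= Rplus_comm Rplus_minus].
have -> : Cminus (l N) L = Copp (Cminus L (l N)) by rewrite /Cminus; ring.
rewrite Cmod_opp.
exact: Cmod_series_le d_tail w_tail (fun k => uvw N _).
Qed.

Lemma is_series_shift (a : nat -> C) l :
  a 0%N = RtoC 0 -> is_series a l -> is_series (fun k => a k.+1) l.
Proof. by move=> a0 al; apply: is_series_incr_1; rewrite a0 /plus /= Cplus_0_r. Qed.

Lemma sum_n_m_gap {G : AbelianMonoid} (u : nat -> G) m n :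
  (m <= n)%N -> (forall k, (m <= k < n)%N -> u k = zero) -> sum_n_m u m n = u n.
Proof.
case: n => [|n] mn u0; first by case: m mn {u0} => // _; rewrite sum_n_n.
rewrite sum_n_Sm; last by apply/ssrnat.leP.
rewrite (sum_n_m_ext_loc _ (fun _ => zero)) ?sum_n_m_const_zero ?plus_zero_l //.
by move=> k [/ssrnat.leP mk /ssrnat.leP kn]; apply: u0; rewrite mk ltnS.
Qed.

Lemma is_series_sparse {K : AbsRing} {V : NormedModule K} (u : nat -> V) (phi : nat -> nat) l :
  {homo phi : m n / (m < n)%N} -> (forall n, (forall k, n <> phi k) -> u n = zero) ->
  ex_series u -> is_series (fun k => u (phi k)) l -> is_series u l.
Proof.
move=> phi_lt u0 [l' ul'] ul.
have phi_mono : {mono phi : m n / (m < n)%N} := leqW_mono (leq_mono phi_lt).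
have sum_phi j : sum_n u (phi j) = sum_n (fun k => u (phi k)) j.
  elim: j => [|j IH].
    rewrite sum_O /sum_n sum_n_m_gap // => n /andP [_ n_lt]; apply: u0 => k nk.
    by move: n_lt; rewrite nk phi_mono.
  rewrite sum_Sn -IH /sum_n (sum_n_m_Chasles _ 0 (phi j)); [|lia|].
  - congr plus; apply: sum_n_m_gap; first exact: phi_lt.
    move=> n /andP [lt_n n_lt]; apply: u0 => k nk.
    by move: lt_n n_lt; rewrite nk !phi_mono; lia.
  - by apply/ssrnat.leP/ltnW/phi_lt.
have phi_oo : filterlim phi eventually eventually.
  have le_phi k : (k <= phi k)%N.
    by elim: k => // k IH; apply: leq_ltn_trans IH (phi_lt _ _ (ltnSn k)).
  move=> P [M PM]; exists M => k /ssrnat.leP Mk; apply: PM.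
  by apply/ssrnat.leP; apply: leq_trans Mk (le_phi k).
have ul'_phi : is_series (fun k => u (phi k)) l'.
  apply: filterlim_ext (filterlim_comp _ _ _ phi _ _ _ _ phi_oo ul') => j.
  exact: sum_phi.
by rewrite (filterlim_locally_unique _ _ _ ul ul'_phi).
Qed.

Lemma is_series_geom_C (w : C) :
  Cmod w < 1 -> is_series (Cpow w) (Cinv (Cminus (RtoC 1) w)).
Proof.
move=> w_lt1.
have w_neq1 : Cminus (RtoC 1) w <> RtoC 0.
  move=> w1; have w_eq1 : w = RtoC 1 by rewrite -[w]Cplus_0_l -w1 /Cminus; ring.
  by move: w_lt1; rewrite w_eq1 Cmod_1; lra.
have partial N :
    sum_n (Cpow w) N = Cdiv (Cminus (RtoC 1) (Cpow w N.+1)) (Cminus (RtoC 1) w).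
  elim: N => [|N IH]; first by rewrite sum_O /=; field.
  by rewrite sum_Sn IH /plus /=; field.
apply: (is_lim_C_of_bound (sum_n (Cpow w)) _
  (fun N => Cmod w ^ N * (Cmod w / Cmod (Cminus (RtoC 1) w)))).
  move=> N; rewrite partial.
  have -> : Cminus (Cdiv (Cminus (RtoC 1) (Cpow w N.+1)) (Cminus (RtoC 1) w))
      (Cinv (Cminus (RtoC 1) w)) = Copp (Cdiv (Cmult (Cpow w N) w) (Cminus (RtoC 1) w)).
    by rewrite Cpow_S; field.
  rewrite Cmod_opp Cmod_div // Cmod_mult Cmod_pow /Rdiv Rmult_assoc; exact: Rle_refl.
have geom : is_lim_seq (pow (Cmod w)) 0.
  by apply: is_lim_seq_geom; rewrite Rabs_pos_eq //; exact: Cmod_ge_0.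
by have := is_lim_seq_scal_r _ (Cmod w / Cmod (Cminus (RtoC 1) w)) _ geom; rewrite /= Rmult_0_l.
Qed.

Lemma Rpower_le_diff (sigma x : R) : 1 < sigma -> 0 < x ->
  Rpower (x + 1) (- sigma) <= (Rpower x (1 - sigma) - Rpower (x + 1) (1 - sigma)) / (sigma - 1).
Proof.
move=> sigma_gt1 x_gt0.
have [c [mvt [xc cx]]] := MVT_cor2 (fun y => Rpower y (1 - sigma))
  (fun y => (1 - sigma) * Rpower y (1 - sigma - 1)) x (x + 1) ltac:(lra)
  (fun c Hc => derivable_pt_lim_power c (1 - sigma) ltac:(lra)).
have -> : Rpower x (1 - sigma) - Rpower (x + 1) (1 - sigma) = (sigma - 1) * Rpower c (- sigma).
  by rewrite -Ropp_minus_distr mvt; replace (1 - sigma - 1) with (- sigma); ring.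
rewrite /Rdiv Rmult_comm -Rmult_assoc Rinv_l ?Rmult_1_l; last lra.
rewrite !Rpower_Ropp; apply: Rinv_le_contravar; first exact: exp_pos.
apply: Rle_Rpower_l; lra.
Qed.

Lemma ex_series_Rpower (sigma : R) : 1 < sigma -> ex_series (fun n => Rpower (INR n.+1) (- sigma)).
Proof.
move=> sigma_gt1.
have Rpower_ge0 x y : 0 <= Rpower x y by left; exact: exp_pos.
apply: (ex_series_of_bounded _ (1 + 1 / (sigma - 1))) => [n | N]; first exact: Rpower_ge0.
suff : sum_n (fun n => Rpower (INR n.+1) (- sigma)) N
    <= 1 + (1 - Rpower (INR N.+1) (1 - sigma)) / (sigma - 1).
  have := Rpower_ge0 (INR N.+1) (1 - sigma); rewrite /Rdiv.
  have := Rinv_0_lt_compat (sigma - 1) ltac:(lra); nra.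
elim: N => [|N IH].
  have Rpower_1l y : Rpower 1 y = 1 by rewrite /Rpower ln_1 Rmult_0_r exp_0.
  by rewrite sum_O /= !Rpower_1l Rminus_diag /Rdiv Rmult_0_l; lra.
rewrite sum_Sn; change (plus ?a ?b) with (a + b).
have := Rpower_le_diff sigma (INR N.+1) sigma_gt1 (lt_0_INR _ (Nat.lt_0_succ N)).
by rewrite -S_INR /Rdiv in IH *; lra.
Qed.

(** * Products of absolutely convergent Dirichlet series *)

(* Summing over all pairs in [0, n]^2 makes partial sums of [dconv] easy to compare with
   products of partial sums; the index 0 contributes nothing once a 0 = b 0 = 0. *)
Definition dconv (a b : nat -> C) (n : nat) : C :=
  \big[Cplus/RtoC 0]_(d < n.+1) \big[Cplus/RtoC 0]_(e < n.+1 | (d * e == n)%N) Cmult (a d) (b e).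

Section DirichletProduct.
Variables (a b : nat -> C).
Hypotheses (a0 : a 0%N = RtoC 0) (b0 : b 0%N = RtoC 0).

Let abs_a n := Cmod (a n).
Let abs_b n := Cmod (b n).

Lemma sum_n_dconv N : sum_n (dconv a b) N =
  \big[Cplus/RtoC 0]_(d < N.+1) \big[Cplus/RtoC 0]_(e < N.+1 | (d * e <= N)%N) Cmult (a d) (b e).
Proof.
rewrite sum_nC_big (big_mul_eq_le _ _ _ (fun d e => Cmult (a d) (b e))) // => x.
  by rewrite a0 Cmult_0_l.
by rewrite b0 Cmult_0_r.
Qed.

Lemma sum_n_Cmod_dconv_le N : sum_n (fun n => Cmod (dconv a b n)) N <=
  \big[Rplus/0]_(d < N.+1) \big[Rplus/0]_(e < N.+1 | (d * e <= N)%N) (abs_a d * abs_b e).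
Proof.
rewrite sum_nR_big -(big_mul_eq_le _ _ _ (fun d e => abs_a d * abs_b e)) => [|e|d]; last 2 first.
- by rewrite /abs_a a0 Cmod_0 Rmult_0_l.
- by rewrite /abs_b b0 Cmod_0 Rmult_0_r.
apply: Rle_sum => n _; apply: Rle_trans (Cmod_sum_le _ _ _ _) _; apply: Rle_sum => d _.
apply: Rle_trans (Cmod_sum_le _ _ _ _) _; apply: Rle_sum => e _.
by rewrite Cmod_mult; exact: Rle_refl.
Qed.

(* The pairs (d, e) in [0, N]^2 with N < d e all lie outside the square [0, m]^2. *)
Lemma dconv_partial_error N m : (m * m <= N)%N ->
  Cmod (Cminus (sum_n (dconv a b) N) (Cmult (sum_n a N) (sum_n b N))) <=
  sum_n abs_a N * sum_n abs_b N - sum_n abs_a m * sum_n abs_b m.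
Proof.
move=> mmN.
have square_le := Rsum_square_le (fun d e => abs_a d * abs_b e) _ _
  (fun d e => Rmult_le_pos _ _ (Cmod_ge_0 _) (Cmod_ge_0 _)) mmN.
have high_le : Cmod (\big[Cplus/RtoC 0]_(d < N.+1)
                      \big[Cplus/RtoC 0]_(e < N.+1 | (N < d * e)%N) Cmult (a d) (b e)) <=
    \big[Rplus/0]_(d < N.+1) \big[Rplus/0]_(e < N.+1 | (N < d * e)%N) (abs_a d * abs_b e).
  apply: Rle_trans (Cmod_sum_le _ _ _ _) _; apply: Rle_sum => d _.
  apply: Rle_trans (Cmod_sum_le _ _ _ _) _; apply: Rle_sum => e _.
  by rewrite Cmod_mult; exact: Rle_refl.
rewrite sum_n_dconv !sum_nC_big !sum_nR_big !big_distrlr /=.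
rewrite (big_square_split _ _ _ N (fun d e => Cmult (a d) (b e))).
rewrite (big_square_split _ _ _ N (fun d e => abs_a d * abs_b e)) /=.
have -> : forall low high, Cminus low (Cplus low high) = Copp high
  by move=> low high; rewrite /Cminus; ring.
rewrite Cmod_opp; move: square_le high_le.
(* [set] identifies sums whose index types are written differently, which [lra] would
   otherwise treat as distinct atoms. *)
set sq := \big[Rplus/0]_(d < m.+1) _.
set low := \big[Rplus/0]_(d < N.+1) \big[Rplus/0]_(e < N.+1 | (d * e <= N)%N) _.
set high := \big[Rplus/0]_(d < N.+1) \big[Rplus/0]_(e < N.+1 | (N < d * e)%N) _.
set cmod_high := Cmod _.
lra.
Qed.

Hypotheses (a_abs : ex_series abs_a) (b_abs : ex_series abs_b).

Lemma ex_series_Cmod_dconv : ex_series (fun n => Cmod (dconv a b n)).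
Proof.
have [[Aa Aa_lim] [Bb Bb_lim]] := (a_abs, b_abs).
have abs_ge0 n : 0 <= abs_a n /\ 0 <= abs_b n by split; exact: Cmod_ge_0.
apply: (ex_series_of_bounded _ (Aa * Bb)) => [n | N]; first exact: Cmod_ge_0.
apply: Rle_trans (sum_n_Cmod_dconv_le N) _.
apply: (Rle_trans _ (sum_n abs_a N * sum_n abs_b N)).
  rewrite !sum_nR_big big_distrlr; apply: Rle_sum => d _.
  by apply Rle_sum_subset => // e; apply: Rmult_le_pos; apply abs_ge0.
apply: Rmult_le_compat; try (apply: sum_n_le_series => // n; apply abs_ge0);
  rewrite sum_nR_big; apply: Rsum_ge0 => n _; apply abs_ge0.
Qed.

Lemma is_series_dconv A B :
  is_series a A -> is_series b B -> is_series (dconv a b) (Cmult A B).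
Proof.
move=> aA bB; have [[Aa Aa_lim] [Bb Bb_lim]] := (a_abs, b_abs).
pose P N := sum_n abs_a N * sum_n abs_b N.
apply: (is_lim_C_of_bound _ _ (fun N => P N - P (Nat.sqrt N) +
          Cmod (Cminus (Cmult (sum_n a N) (sum_n b N)) (Cmult A B)))) => [N|].
  have -> : Cminus (sum_n (dconv a b) N) (Cmult A B) =
      Cplus (Cminus (sum_n (dconv a b) N) (Cmult (sum_n a N) (sum_n b N)))
            (Cminus (Cmult (sum_n a N) (sum_n b N)) (Cmult A B)) by rewrite /Cminus; ring.
  apply: Rle_trans (Cmod_triangle _ _) _; apply: Rplus_le_compat_r.
  by apply: dconv_partial_error; apply/ssrnat.leP; exact: (proj1 (Nat.sqrt_spec' N)).
have sqrt_oo : filterlim Nat.sqrt eventually eventually.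
  move=> Q [M QM]; exists (M * M)%N => n Mn; apply: QM.
  by have := Nat.sqrt_le_mono _ _ Mn; rewrite Nat.sqrt_square.
have P_lim : is_lim_seq P (Aa * Bb) := is_lim_seq_mult' _ _ _ _ Aa_lim Bb_lim.
rewrite -(Rplus_0_r 0) -{1}(Rminus_diag (Aa * Bb)).
apply: is_lim_seq_plus'; last exact/is_lim_seq_Cmod_sub/is_lim_C_mult.
exact: is_lim_seq_minus' P_lim (is_lim_seq_subseq _ _ _ sqrt_oo P_lim).
Qed.
End DirichletProduct.

Lemma Cmod_cpow x s : Cmod (cpow x s) = exp (Re s * ln x).
Proof.
rewrite /Cmod /cpow /=.
have -> : (exp (Re s * ln x) * cos (Im s * ln x)) ^ 2 + (exp (Re s * ln x) * sin (Im s * ln x)) ^ 2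
  = (exp (Re s * ln x))² * ((sin (Im s * ln x))² + (cos (Im s * ln x))²) by rewrite /Rsqr; ring.
by rewrite sin2_cos2 Rmult_1_r sqrt_Rsqr //; left; exact: exp_pos.
Qed.

Lemma cpow_neq0 x s : cpow x s <> RtoC 0.
Proof.
move=> /(f_equal Cmod); rewrite Cmod_cpow Cmod_0.
by have := exp_pos (Re s * ln x); lra.
Qed.

Lemma cpowM x y s : 0 < x -> 0 < y -> cpow (x * y) s = Cmult (cpow x s) (cpow y s).
Proof.
move=> x_gt0 y_gt0; rewrite /cpow /Cmult /= ln_mult //.
rewrite !Rmult_plus_distr_l exp_plus cos_plus sin_plus.
by f_equal; ring.
Qed.

(* n^-s, with the junk value 0 at n = 0 so that Dirichlet series can be indexed from 0. *)
Definition inv_cpow (s : C) (n : nat) : C := if n is 0 then RtoC 0 else Cinv (cpow (INR n) s).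

Lemma inv_cpowE s n : (0 < n)%N -> inv_cpow s n = Cinv (cpow (INR n) s).
Proof. by case: n. Qed.

Lemma inv_cpowM s d e : inv_cpow s (d * e) = Cmult (inv_cpow s d) (inv_cpow s e).
Proof.
case: d => [|d]; first by rewrite mul0n /= Cmult_0_l.
case: e => [|e]; first by rewrite muln0 /= Cmult_0_r.
rewrite !inv_cpowE ?muln_gt0 // mult_INR cpowM; try exact: lt_0_INR (Nat.lt_0_succ _).
by field; split; exact: cpow_neq0.
Qed.

Lemma inv_cpowX s p k : inv_cpow s (p ^ k.+1) = Cpow (inv_cpow s p) k.+1.
Proof.
elim: k => [|k IH]; first by rewrite expn1 Cpow_1_r.
by rewrite expnS inv_cpowM IH Cpow_S.
Qed.

Lemma Cmod_inv_cpow s n : (0 < n)%N -> Cmod (inv_cpow s n) = Rpower (INR n) (- Re s).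
Proof.
case: n => [//|n] _; rewrite /inv_cpow Cmod_inv; last exact: cpow_neq0.
by rewrite Cmod_cpow /Rpower -exp_Ropp Ropp_mult_distr_l.
Qed.

Lemma ex_series_Cmod_inv_cpow s : 1 < Re s -> ex_series (fun n => Cmod (inv_cpow s n)).
Proof.
move=> Re_s_gt1; apply/ex_series_incr_1.
by apply: ex_series_ext (ex_series_Rpower _ Re_s_gt1) => n; rewrite Cmod_inv_cpow.
Qed.

Lemma Cmod_inv_cpow_lt1 s n : 1 < Re s -> (1 < n)%N -> Cmod (inv_cpow s n) < 1.
Proof.
move=> Re_s_gt1 n_gt1; rewrite Cmod_inv_cpow; last lia.
rewrite -(Rpower_O (INR n)); last by apply: lt_0_INR; lia.
apply: Rpower_lt; last lra.
by apply: (lt_INR 1); lia.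
Qed.

Lemma is_series_inv_cpow_pfactor s p : 1 < Re s -> (1 < p)%N ->
  is_series (fun k => inv_cpow s (p ^ k.+1)) (Cinv (Cminus (cpow (INR p) s) (RtoC 1))).
Proof.
move=> Re_s_gt1 p_gt1; set w := inv_cpow s p.
have w_lt1 : Cmod w < 1 by exact: Cmod_inv_cpow_lt1.
have w_neq1 : w <> RtoC 1 by move=> w1; move: w_lt1; rewrite w1 Cmod_1; lra.
have wE : w = Cinv (cpow (INR p) s) by rewrite /w inv_cpowE // ltnW.
have c_neq0 := cpow_neq0 (INR p) s.
have c_neq1 : Cminus (cpow (INR p) s) (RtoC 1) <> RtoC 0.
  move=> c1; apply: w_neq1; rewrite wE.
  have -> : cpow (INR p) s = Cplus (Cminus (cpow (INR p) s) (RtoC 1)) (RtoC 1)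
    by rewrite /Cminus; ring.
  by rewrite c1 Cplus_0_l; field.
have one_w : Cminus (RtoC 1) w <> RtoC 0.
  by move=> h; apply: w_neq1; rewrite -[w]Cplus_0_l -h /Cminus; ring.
have -> : Cinv (Cminus (cpow (INR p) s) (RtoC 1)) = Cmult w (Cinv (Cminus (RtoC 1) w)).
  by rewrite wE in one_w *; field.
apply: is_series_ext (is_series_scal (K := C_AbsRing) (V := C_NormedModule) w _ _
  (is_series_geom_C w w_lt1)) => k.
by rewrite inv_cpowX.
Qed.

(** * Arithmetic functions *)

Section Arithmetic.
Local Open Scope nat_scope.

Lemma big_seq_ord {T : Type} {idx : T} {op : Monoid.com_law idx} (s : seq nat) K (F : nat -> T) :
  uniq s -> {in s, forall x, x < K} ->
  \big[op/idx]_(x <- s) F x = \big[op/idx]_(x < K | (x : nat) \in s) F x.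
Proof.
move=> s_uniq s_lt; rewrite -(big_mkord (fun x => x \in s)) -[RHS]big_filter; apply: perm_big.
apply: uniq_perm s_uniq _ _ => [|x]; first exact: (filter_uniq _ (iota_uniq _ _)).
rewrite (mem_filter (fun i => i \in s)) mem_index_iota.
by case: (boolP (x \in s)) => // xs; rewrite s_lt.
Qed.

Lemma bigOmegaE n K : n < K -> bigOmega n = \sum_(p < K) logn p n.
Proof.
move=> nK; have -> : bigOmega n = \sum_(p <- primes n) logn p n.
  rewrite /bigOmega; elim: (primes n) => [|p ps IH]; first by rewrite big_nil.
  by rewrite big_cons /= IH.
rewrite (big_seq_ord _ K _ (primes_uniq n)) => [|p]; last first.
  by rewrite mem_primes => /and3P [_ n_gt0 /(dvdn_leq n_gt0) pn]; apply: leq_ltn_trans nK.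
by apply: big_rmcond => p; rewrite -logn_gt0 lt0n negbK => /eqP.
Qed.

Lemma bigOmegaM d e : 0 < d -> 0 < e -> bigOmega (d * e) = bigOmega d + bigOmega e.
Proof.
move=> d_gt0 e_gt0.
rewrite !(bigOmegaE _ (d * e).+1) ?ltnS ?leq_pmulr ?leq_pmull // -big_split /=.
by apply: eq_bigr => p _; exact: lognM.
Qed.

Lemma bigOmega_prime p : prime p -> bigOmega p = 1.
Proof. by move=> p_pr; rewrite /bigOmega primes_prime //= logn_prime // eqxx. Qed.

Lemma tauE n : 0 < n -> tau n = \sum_(d < n.+1 | d %| n) 1.
Proof.
move=> n_gt0; rewrite /tau -sum1_size (big_seq_ord _ n.+1 _ (divisors_uniq n)) => [|d].
  by apply: eq_bigl => d; rewrite -dvdn_divisors.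
by rewrite -dvdn_divisors // => /(dvdn_leq n_gt0).
Qed.

Lemma sum_ord_eq (P : pred nat) n x : \sum_(i < n | P i) (i == x :> nat) = (x < n) && P x.
Proof.
rewrite (eq_bigr (fun i : 'I_n => if (i : nat) == x then 1 else 0)) => [|i _]; last by case: eqP.
rewrite -big_mkcondr; apply: etrans (big_ord1_cond_eq _ (fun=> 1) P x n) _.
by case: (_ && _).
Qed.

(* [ppow_ind] is the indicator L of the prime powers p^k, k >= 1; [ppow_upto N] only counts
   the primes p <= N. *)
Definition is_ppow (p d : nat) : bool := (0 < logn p d) && (d == p ^ logn p d).

Definition ppow_upto (N d : nat) : nat := \sum_(p < N.+1) is_ppow p d.

Definition ppow_ind (d : nat) : nat := ppow_upto d d.

Lemma is_ppow_prime p d : is_ppow p d -> prime p.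
Proof. by case/andP; rewrite logn_gt0 mem_primes => /andP []. Qed.

Lemma is_ppow_pfactor p k : prime p -> is_ppow p (p ^ k.+1).
Proof. by move=> p_pr; rewrite /is_ppow pfactorK // eqxx. Qed.

Lemma is_ppow_pdiv p d : is_ppow p d -> pdiv d = p.
Proof.
move=> /[dup] /is_ppow_prime p_pr /andP [logn_gt0 /eqP ->].
by rewrite -(prednK logn_gt0) pdiv_pfactor.
Qed.

Lemma is_ppow_leq p d : is_ppow p d -> p <= d.
Proof.
move=> /[dup] /is_ppow_pdiv <- /andP [logn_gt0 _]; apply: pdiv_leq.
by rewrite lt0n; apply: contraTneq logn_gt0 => ->; rewrite logn0.
Qed.

Lemma ppow_upto_le1 N d : ppow_upto N d <= 1.
Proof.
apply: (@leq_trans (\sum_(p < N.+1) (p == pdiv d :> nat))).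
  by apply: leq_sum => p _; case: (boolP (is_ppow p d)) => // /is_ppow_pdiv ->; rewrite eqxx.
by rewrite (sum_ord_eq xpredT); case: (_ && _).
Qed.

Lemma ppow_upto_stable N d : d <= N -> ppow_upto N d = ppow_ind d.
Proof.
move=> dN; rewrite /ppow_ind /ppow_upto; symmetry.
apply: (big_ord_widen_idx _ _ _ xpredT (fun p => nat_of_bool (is_ppow p d)) _ _ dN).
by move=> p dp _; apply/eqP; rewrite eqb0; apply: contraTN dp => /is_ppow_leq; rewrite -leqNgt.
Qed.

Lemma ppow_upto_le N d : ppow_upto N d <= ppow_ind d.
Proof.
case: (leqP d N) => [/ppow_upto_stable -> // | Nd].
rewrite /ppow_ind /ppow_upto (big_ord_widen d.+1 (fun p => nat_of_bool (is_ppow p d)) (leqW Nd)).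
by rewrite big_mkcond; apply: leq_sum => p _; case: ifP.
Qed.

Lemma sum_eq_pow p d M : prime p -> 0 < d <= M ->
  \sum_(1 <= k < M) (d == p ^ k) = is_ppow p d.
Proof.
move=> p_pr /andP [d_gt0 dM]; case: (boolP (is_ppow p d)) => [pd | not_pd].
  move: (pd) => /andP [l_gt0 /eqP]; set l := logn p d => dE.
  rewrite (eq_bigr (fun k => if k == l then 1 else 0)) => [|k _]; last first.
    by rewrite dE eqn_exp2l ?prime_gt1 // eq_sym; case: eqP.
  by rewrite -big_mkcond big_nat1_eq l_gt0 (leq_trans (ltn_logl _ d_gt0) dM).
apply: big1_seq => k /andP [_]; rewrite mem_index_iota => /andP [k_gt0 _].
case: eqP => // dE; move: not_pd; rewrite dE -(prednK k_gt0) is_ppow_pfactor //.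
Qed.

Lemma sum_dvdn_is_ppow p n : 0 < n -> \sum_(d < n.+1 | d %| n) is_ppow p d = logn p n.
Proof.
move=> n_gt0; case: (boolP (prime p)) => [p_pr | not_pr]; last first.
  rewrite big1 => [|d _]; last by apply/eqP; rewrite eqb0; apply: contraNN not_pr => /is_ppow_prime.
  by apply/esym/eqP; rewrite eqn0Ngt logn_gt0 mem_primes (negbTE not_pr).
rewrite (eq_bigr (fun d : 'I_n.+1 => \sum_(1 <= k < n) (d == p ^ k :> nat))) => [|d dn]; last first.
  by rewrite sum_eq_pow // (dvdn_gt0 n_gt0 dn) dvdn_leq.
rewrite exchange_big logn_count_dvd //; apply: eq_bigr => k _.
rewrite (sum_ord_eq (fun d => d %| n)) ltnS andbC.
by case: (boolP (_ %| n)) => // /(dvdn_leq n_gt0) ->.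
Qed.

Definition nconv (f g : nat -> nat) (n : nat) : nat :=
  \sum_(d < n.+1) \sum_(e < n.+1 | d * e == n) f d * g e.

Lemma nconv_ppow_ind n : 0 < n -> nconv ppow_ind (fun=> 1) n = bigOmega n.
Proof.
move=> n_gt0; rewrite /nconv (big_mul_eq_dvdn _ _ _ (fun d _ => ppow_ind d * 1)) //.
rewrite (eq_bigr (fun d : 'I_n.+1 => ppow_upto n d)) => [|d dn]; last first.
  by rewrite muln1 ppow_upto_stable // dvdn_leq.
rewrite exchange_big /= (bigOmegaE n n.+1) //; apply: eq_bigr => p _.
exact: (sum_dvdn_is_ppow p n n_gt0).
Qed.

Lemma tau_bigOmega n : 0 < n -> tau n * bigOmega n = 2 * nconv bigOmega (fun=> 1) n.
Proof.
move=> n_gt0; rewrite /nconv.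
have swap : \sum_(d < n.+1) \sum_(e < n.+1 | d * e == n) bigOmega d * 1 =
            \sum_(d < n.+1) \sum_(e < n.+1 | d * e == n) bigOmega e.
  rewrite (exchange_big_dep xpredT) //=; apply: eq_bigr => e _.
  by apply: eq_big => [d | d _]; [rewrite mulnC | rewrite muln1].
have npairs : \sum_(d < n.+1) \sum_(e < n.+1 | d * e == n) 1 = tau n.
  by rewrite (big_mul_eq_dvdn _ _ _ (fun _ _ => 1)) // tauE.
rewrite mul2n -addnn {2}swap -big_split /= -npairs big_distrl /=.
apply: eq_bigr => d _; rewrite -big_split big_distrl /=.
apply: eq_bigr => e /eqP de.
have /andP [d_gt0 e_gt0] : (0 < d) && (0 < e) by rewrite -muln_gt0 de.
by rewrite muln1 mul1n -bigOmegaM // de.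
Qed.

End Arithmetic.

(** * Dirichlet series of arithmetic functions *)

Definition dterm (f : nat -> nat) (s : C) (n : nat) : C := Cmult (RtoC (INR (f n))) (inv_cpow s n).

Lemma dterm0 f s : dterm f s 0 = RtoC 0.
Proof. exact: Cmult_0_r. Qed.

Lemma eq_dterm f g s : (forall n, (0 < n)%N -> f n = g n) -> dterm f s =1 dterm g s.
Proof. by move=> fg [|n]; rewrite ?dterm0 // /dterm fg. Qed.

Lemma Cmod_dterm_le f s n : (f n <= 1)%N -> Cmod (dterm f s n) <= Cmod (inv_cpow s n).
Proof.
rewrite /dterm Cmod_mult Cmod_R Rabs_pos_eq; last exact: pos_INR.
case: (f n) => [|[|//]] _ /=; rewrite ?Rmult_0_l ?Rmult_1_l; [exact: Cmod_ge_0 | exact: Rle_refl].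
Qed.

Lemma ex_series_Cmod_dterm_le1 f s : 1 < Re s -> (forall n, f n <= 1)%N ->
  ex_series (fun n => Cmod (dterm f s n)).
Proof.
move=> Re_s_gt1 f_le1; apply: ex_series_le (ex_series_Cmod_inv_cpow s Re_s_gt1) => n.
rewrite /norm /= /abs /= Rabs_pos_eq; [exact: Cmod_dterm_le | exact: Cmod_ge_0].
Qed.

Lemma RtoC_INR_sum I (r : seq I) (P : pred I) (F : I -> nat) :
  RtoC (INR (\sum_(i <- r | P i) F i)) = \big[Cplus/RtoC 0]_(i <- r | P i) RtoC (INR (F i)).
Proof. by apply: (big_morph (fun n => RtoC (INR n))) => [m n|]; rewrite ?plus_INR ?RtoC_plus. Qed.

Lemma dconv_dterm f g s n : dconv (dterm f s) (dterm g s) n = dterm (nconv f g) s n.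
Proof.
rewrite /dconv /dterm /nconv RtoC_INR_sum big_distrl; apply: eq_bigr => d _.
rewrite RtoC_INR_sum big_distrl; apply: eq_bigr => e /eqP de.
have -> : inv_cpow s n = Cmult (inv_cpow s d) (inv_cpow s e) by rewrite -inv_cpowM de.
by rewrite mult_INR RtoC_mult /=; ring.
Qed.

Lemma is_series_dterm_nconv f g s F G :
  ex_series (fun n => Cmod (dterm f s n)) -> ex_series (fun n => Cmod (dterm g s n)) ->
  is_series (dterm f s) F -> is_series (dterm g s) G ->
  is_series (dterm (nconv f g) s) (Cmult F G) /\
  ex_series (fun n => Cmod (dterm (nconv f g) s n)).
Proof.
move=> f_abs g_abs fF gG; have conv := dconv_dterm f g s.
split.
  exact: is_series_ext conv (is_series_dconv _ _ (dterm0 f s) (dterm0 g s) f_abs g_abs _ _ fF gG).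
apply: ex_series_ext (ex_series_Cmod_dconv _ _ (dterm0 f s) (dterm0 g s) f_abs g_abs) => n.
by rewrite conv.
Qed.

Section PrimePowerSeries.
Variable s : C.
Hypothesis Re_s_gt1 : 1 < Re s.

Lemma is_series_is_ppow p : is_series (dterm (fun n => is_ppow p n) s) (P1_term s p).
Proof.
rewrite /P1_term; case: (boolP (prime p)) => [p_pr | not_pr]; last first.
  apply: (filterlim_ext (fun _ => zero)); last exact: filterlim_const.
  move=> N; rewrite /sum_n (sum_n_m_ext_loc _ (fun _ => zero)) ?sum_n_m_const_zero // => n _.
  by rewrite /dterm /= (negbTE (contra (@is_ppow_prime p n) not_pr)) Cmult_0_l.
apply: (is_series_sparse _ (fun k => p ^ k.+1)%N).
- by move=> j k; rewrite ltn_exp2l ?prime_gt1.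
- move=> n n_pow; rewrite /dterm; case: (boolP (is_ppow p n)) => [pn | _]; last exact: Cmult_0_l.
  case: (n_pow (logn p n).-1); move: pn => /andP [logn_gt0 /eqP {1}->].
  by rewrite prednK.
- apply: (@ex_series_le C_AbsRing C_CompleteNormedModule _ _ _
    (ex_series_Cmod_dterm_le1 _ s Re_s_gt1 (fun n => leq_b1 (is_ppow p n)))).
  by move=> n; exact: Rle_refl.
apply: is_series_ext (is_series_inv_cpow_pfactor s p Re_s_gt1 (prime_gt1 p_pr)) => k.
by rewrite /dterm is_ppow_pfactor // Cmult_1_l.
Qed.

Lemma is_series_ppow_upto N : is_series (dterm (ppow_upto N) s) (sum_n (P1_term s) N).
Proof.
elim: N => [|N IH].
  rewrite sum_O; apply: is_series_ext (is_series_is_ppow 0) => n.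
  by rewrite /dterm /ppow_upto big_ord_recr big_ord0.
rewrite sum_Sn; apply: is_series_ext (is_series_plus _ _ _ _ IH (is_series_is_ppow N.+1)) => n.
by rewrite /dterm /ppow_upto [in RHS]big_ord_recr plus_INR RtoC_plus /plus /=; ring.
Qed.

Lemma is_series_P1_term L : is_series (dterm ppow_ind s) L -> is_series (P1_term s) L.
Proof.
move=> ppow_L; apply: (is_lim_series_approx _ (fun N => dterm (ppow_upto N) s)
  (fun n => Cmod (inv_cpow s n)) _ _ ppow_L is_series_ppow_upto
  (ex_series_Cmod_inv_cpow s Re_s_gt1)).
  by move=> N n nN; rewrite /dterm ppow_upto_stable.
move=> N n; have diff_le1 : (ppow_ind n - ppow_upto N n <= 1)%N.
  by apply: leq_trans (leq_subr _ _) _; exact: ppow_upto_le1.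
have -> : Cminus (dterm ppow_ind s n) (dterm (ppow_upto N) s n) =
    dterm (fun n => (ppow_ind n - ppow_upto N n)%N) s n.
  rewrite /dterm minus_INR; last exact/ssrnat.leP/ppow_upto_le.
  by rewrite RtoC_minus /Cminus; ring.
exact: Cmod_dterm_le.
Qed.
End PrimePowerSeries.

Section SeriesOfOmega.
Variable s : C.
Variables L Z : C.
Hypotheses (Re_s_gt1 : 1 < Re s)
  (ppow_L : is_series (dterm ppow_ind s) L) (one_Z : is_series (dterm (fun=> 1%N) s) Z).

Let one_abs := ex_series_Cmod_dterm_le1 (fun=> 1%N) s Re_s_gt1 (fun=> leqnn 1).

Lemma is_series_bigOmega :
  is_series (dterm bigOmega s) (Cmult L Z) /\ ex_series (fun n => Cmod (dterm bigOmega s n)).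
Proof.
have ppow_abs := ex_series_Cmod_dterm_le1 ppow_ind s Re_s_gt1 (fun n => ppow_upto_le1 n n).
have [LZ LZ_abs] := is_series_dterm_nconv _ _ _ _ _ ppow_abs one_abs ppow_L one_Z.
have E := eq_dterm _ _ s nconv_ppow_ind.
by split; [apply: is_series_ext E LZ | apply: ex_series_ext LZ_abs => n; rewrite E].
Qed.

Lemma is_series_tau_bigOmega : is_series (dterm (fun n => tau n * bigOmega n)%N s)
  (Cmult (RtoC 2) (Cmult (Cmult L Z) Z)).
Proof.
have [Omega_L Omega_abs] := is_series_bigOmega.
have [LZZ _] := is_series_dterm_nconv _ _ _ _ _ Omega_abs one_abs Omega_L one_Z.
apply: is_series_ext (is_series_scal (K := C_AbsRing) (RtoC 2) _ _ LZZ) => [[|n]].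
  by rewrite !dterm0 /scal /= /mult /= Cmult_0_r.
rewrite /dterm tau_bigOmega // mult_INR (_ : INR 2 = 2); last by simpl; lra.
by rewrite RtoC_mult -Cmult_assoc.
Qed.
End SeriesOfOmega.

Theorem theorem4p1 (s : C) (Hs : 1 < Re s) :
  exists (z P : C),
    is_series (zeta_term s) z /\
    is_series (POmega_term s) P /\
    is_series (P1_term s) P /\
    is_series (tauOmega_term s) (Cmult (RtoC 2) (Cmult (Cmult z z) P)).
Proof.
have [Z one_Z] := ex_series_of_Cmod _ (ex_series_Cmod_dterm_le1 (fun=> 1%N) s Hs (fun=> leqnn 1)).
have [L ppow_L] := ex_series_of_Cmod _
  (ex_series_Cmod_dterm_le1 ppow_ind s Hs (fun n => ppow_upto_le1 n n)).
exists Z, L; split; [|split; [|split]].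
- apply: is_series_ext (is_series_shift _ _ (dterm0 _ s) one_Z) => k.
  by rewrite /dterm Cmult_1_l.
- apply: is_series_ext (is_series_P1_term s Hs L ppow_L) => p.
  by rewrite /POmega_term /P1_term; case: ifP => // /bigOmega_prime ->; rewrite /Cdiv Cmult_1_l.
- exact: is_series_P1_term.
have -> : Cmult (Cmult Z Z) L = Cmult (Cmult L Z) Z by ring.
exact: is_series_shift _ _ (dterm0 _ s) (is_series_tau_bigOmega s L Z Hs ppow_L one_Z).
Qed.
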